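(* Let $t\geq 3$, $E_t=\{1,\ldots,t\}$, and let $A$ be a nonempty subset of $E_t$, written as a disjoint union of intervals of integers $A=[i_1,j_1]\,\dot\cup\,[i_2,j_2]\,\dot\cup\cdots\dot\cup\,[i_\varrho,j_\varrho]$ with $i_k\le j_k$ and $j_k+2\le i_{k+1}$ for $1\le k\le\varrho-1$. Let $T:={}_{-A}\mathrm{T}^{(+)}\in\{1,-1\}^t$ be the vector with $T(e)=-1$ for $e\in A$ and $T(e)=1$ otherwise. Then: (i) If $\{1,t\}\cap A=\{1\}$ (so $i_1=1$), then $\mathfrak{q}(T)=2\varrho-1$, $\boldsymbol{x}(T)=\sum_{k=1}^{\varrho}\boldsymbol{\sigma}(j_k+1)-\sum_{\ell=2}^{\varrho}\boldsymbol{\sigma}(i_\ell)$; moreover $\mathfrak{q}(\mathrm{ro}(T))=2\varrho-1$, $\boldsymbol{x}(\mathrm{ro}(T))=\sum_{k=1}^{\varrho}\boldsymbol{\sigma}(t-j_k+1)-\sum_{\ell=2}^{\varrho}\boldsymbol{\sigma}(t-i_\ell+2)$, and $\boldsymbol{x}(\mathrm{ro}(T))=\boldsymbol{x}(T)\,\overline{\mathbf{U}}(t)\,\overline{\mathbf{T}}(t)$. (ii) If $\{1,t\}\cap A=\{1,t\}$ (so $i_1=1$, $j_\varrho=t$), then $\mathfrak{q}(T)=2\varrho-1$, $\boldsymbol{x}(T)=-\boldsymbol{\sigma}(1)+\sum_{k=1}^{\varrho-1}\boldsymbol{\sigma}(j_k+1)-\sum_{\ell=2}^{\varrho}\boldsymbol{\sigma}(i_\ell)$;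 moreover $\mathfrak{q}(\mathrm{ro}(T))=2\varrho-1$, $\boldsymbol{x}(\mathrm{ro}(T))=\boldsymbol{\sigma}(1)+\sum_{k=1}^{\varrho-1}\boldsymbol{\sigma}(t-j_k+1)-\sum_{\ell=2}^{\varrho}\boldsymbol{\sigma}(t-i_\ell+2)$, and $\boldsymbol{x}(\mathrm{ro}(T))=\boldsymbol{\sigma}(1)+\boldsymbol{x}(T)\,\overline{\mathbf{U}}(t)\,\overline{\mathbf{T}}(t)$. (iii) If $\{1,t\}\cap A=\emptyset$, then $\mathfrak{q}(T)=2\varrho+1$, $\boldsymbol{x}(T)=\boldsymbol{\sigma}(1)+\sum_{k=1}^{\varrho}\boldsymbol{\sigma}(j_k+1)-\sum_{\ell=1}^{\varrho}\boldsymbol{\sigma}(i_\ell)$; moreover $\mathfrak{q}(\mathrm{ro}(T))=2\varrho+1$, $\boldsymbol{x}(\mathrm{ro}(T))=-\boldsymbol{\sigma}(1)+\sum_{k=1}^{\varrho}\boldsymbol{\sigma}(t-j_k+1)-\sum_{\ell=1}^{\varrho}\boldsymbol{\sigma}(t-i_\ell+2)$, and $\boldsymbol{x}(\mathrm{ro}(T))=-\boldsymbol{\sigma}(1)+\boldsymbol{x}(T)\,\overline{\mathbf{U}}(t)\,\overline{\mathbf{T}}(t)$. (iv) If $\{1,t\}\cap A=\{t\}$ (so $j_\varrho=t$), then $\mathfrak{q}(T)=2\varrho-1$, $\boldsymbol{x}(T)=\sum_{k=1}^{\varrho-1}\boldsymbol{\sigma}(j_k+1)-\sum_{\ell=1}^{\varrho}\boldsymbol{\sigma}(i_\ell)$;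 moreover $\mathfrak{q}(\mathrm{ro}(T))=2\varrho-1$, $\boldsymbol{x}(\mathrm{ro}(T))=\sum_{k=1}^{\varrho-1}\boldsymbol{\sigma}(t-j_k+1)-\sum_{\ell=1}^{\varrho}\boldsymbol{\sigma}(t-i_\ell+2)$, and $\boldsymbol{x}(\mathrm{ro}(T))=\boldsymbol{x}(T)\,\overline{\mathbf{U}}(t)\,\overline{\mathbf{T}}(t)$.
   Context: Vectors are row vectors in $\mathbb{R}^t$; $\boldsymbol{\sigma}(e)$ is the $e$-th standard unit vector, $\mathrm{T}^{(+)}=(1,\ldots,1)$. For $S\subseteq E_t$, ${}_{-S}\mathrm{T}^{(+)}$ denotes the vector with entries $-1$ on $S$ and $1$ elsewhere. Define $R^0:=\mathrm{T}^{(+)}$ and $R^s:={}_{-[s]}\mathrm{T}^{(+)}$ for $1\le s\le t-1$, where $[s]=\{1,\ldots,s\}$ (these form the first half of a symmetric cycle $R^0,\ldots,R^{2t-1}$ in the hypercube graph on $\{1,-1\}^t$, with $R^{t+k}=-R^k$). The vectors $R^0,\ldots,R^{t-1}$ form a basis of $\mathbb{R}^t$; for $T\in\{1,-1\}^t$, $\boldsymbol{x}(T)=(x_1,\ldots,x_t)$ denotes the unique vector (it lies in $\{-1,0,1\}^t$) with $T=\sum_{i=1}^t x_iR^{i-1}$, and $\mathfrak{q}(T)$ denotes the number of nonzero entries of $\boldsymbol{x}(T)$ (equivalently the cardinality of the unique inclusion-minimal subset of $\{R^0,\ldots,R^{2t-1}\}$ summing to $T$). $\overline{\mathbf{U}}(t)$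 is the $t\times t$ backward identity matrix, with $(i,j)$ entry $\delta_{i+j,t+1}$; $\overline{\mathbf{T}}(t)$ is the $t\times t$ forward shift matrix, with $(i,j)$ entry $\delta_{j-i,1}$. The relabeled opposite of $T$ is $\mathrm{ro}(T):=-T\,\overline{\mathbf{U}}(t)$, i.e. $\mathrm{ro}(T)(e)=-T(t-e+1)$. *)

(* Vectors in R^t are row vectors 'rV[R]_t over an arbitrary
   real field R (covers the reals).  Coordinates e in E_t = {1..t} correspond
   to ordinals j : 'I_t with e = j.+1. *)
From HB Require Import structures.
From mathcomp Require Import all_boot all_order all_algebra.
Set Implicit Arguments. Unset Strict Implicit. Unset Printing Implicit Defensive.
Import Order.TTheory GRing.Theory Num.Theory.
Local Open Scope ring_scope.

Section Defs.
Variable R : realFieldType.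

Definition sigma (t e : nat) : 'rV[R]_t := \row_(j < t) (j.+1 == e)%:R.

Definition negT (t : nat) (S : pred nat) : 'rV[R]_t :=
  \row_(j < t) (if S j.+1 then -1 else 1).

Definition Rvec (t s : nat) : 'rV[R]_t := negT t (fun e => e <= s)%N.

Definition Rmat (t : nat) : 'M[R]_t := \matrix_(s < t) Rvec t s.

(* x(T): the unique coefficient vector with T = sum_i x_i R^{i-1},
   i.e. T = x *m Rmat t  (Rmat t is invertible) *)
Definition xvec (t : nat) (T : 'rV[R]_t) : 'rV[R]_t := T *m invmx (Rmat t).

Definition qnum (t : nat) (T : 'rV[R]_t) : nat :=
  #|[set j : 'I_t | xvec T 0 j != 0]|.

Definition Ubar (t : nat) : 'M[R]_t := \matrix_(i < t, j < t) ((i.+1 + j.+1 == t.+1)%N)%:R.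

Definition Tbar (t : nat) : 'M[R]_t := \matrix_(i < t, j < t) ((nat_of_ord j == i.+1)%N)%:R.

Definition ro (t : nat) (T : 'rV[R]_t) : 'rV[R]_t := - (T *m Ubar t).

End Defs.

(* membership in A = union of the intervals [i k, j k], k < rho (0-based k) *)
Definition inA (rho : nat) (i j : nat -> nat) (e : nat) : bool :=
  [exists k : 'I_rho, (i k <= e <= j k)%N].

(* The rows [R^0, ..., R^(t-1)] of [Rmat] differ consecutively in a single
   coordinate, so the coordinates of a row [T] in this basis are half-differences
   of consecutive entries: [x_1 = (T(1) + T(t)) / 2] and
   [x_e = (T(e) - T(e-1)) / 2] for [e >= 2].  For [T] the sign vector of a union
   [A] of separated intervals, [x_e] is [+1] just after the end of an interval,
   [-1] at the start of an interval and [0] elsewhere, while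
   [x_1 = 1 - [1 \in A] - [t \in A]].  Hence [q(T)] counts the [2 rho] interval
   boundaries except those at [1] and [t + 1], plus one when [x_1 <> 0], i.e.
   when [1 \in A] and [t \in A] agree.  Reversing and negating [T]
   reflects these differences, so [x(ro T) = x(T) U T - x_1(T) sigma(1)] and
   [q(ro T) = q(T)]. *)
From mathcomp Require Import all_boot all_order all_algebra.
From mathcomp Require Import zify lra.
Import Order.TTheory GRing.Theory Num.Theory.
Local Open Scope ring_scope.

Section BasisCoordinates.
Variables (R : realFieldType) (n : nat).
Local Notation t := n.+1.
Implicit Types (x y T : 'rV[R]_t) (a : pred nat).

Lemma Rmat_entry (s c : 'I_t) : Rmat R t s c = if (c < s)%N then -1 else 1.
Proof. by rewrite !mxE. Qed.

Lemma ord_pred_val (c : 'I_t) : ord_pred c = (if c == 0 :> nat then n else c.-1) :> nat.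
Proof.
case: c => [[|c] lt_ct] /=; first by rewrite modn_small.
by rewrite modnDr modn_small // ltnW.
Qed.

Lemma rev_ord_val (c : 'I_t) : rev_ord c = (n - c)%N :> nat.
Proof. exact: subSS. Qed.

(* [ord_pred] is the cyclic predecessor: the entry [c = 0] pairs [y_0] with the
   last entry of [y]. *)
Definition Rcoords y : 'rV[R]_t := \row_(c < t)
  ((if c == 0 :> nat then y 0 c + y 0 (ord_pred c) else y 0 c - y 0 (ord_pred c)) / 2).

Lemma Rcoords_mulRmat x : Rcoords (x *m Rmat R t) = x.
Proof.
apply/rowP => c; rewrite !mxE; case: ifP => [/eqP c0 | /negbT c_gt0].
- have -> : c = ord0 by apply/val_inj.
  have max_gtF (s : 'I_t) : (n < s)%N = false by rewrite ltnNge -ltnS ltn_ord.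
  rewrite -big_split (bigD1 ord0) //= big1 => [|s s_gt0]; rewrite !Rmat_entry ord_pred_val /=.
    lra.
  by rewrite max_gtF lt0n s_gt0; lra.
- rewrite -sumrB (bigD1 c) //= big1 => [|s s_c];
    rewrite !Rmat_entry ord_pred_val (negbTE c_gt0).
    by rewrite ltnn ltn_predL lt0n c_gt0; lra.
  have s_c' : nat_of_ord s != c := s_c.
  have -> : (c < s)%N = (c.-1 < s)%N by lia.
  lra.
Qed.

Lemma Rmat_unit : Rmat R t \in unitmx.
Proof.
rewrite -row_free_unit; apply: inj_row_free => v v0.
rewrite -(Rcoords_mulRmat v) v0; apply/rowP => c; rewrite !mxE.
by case: ifP => _; lra.
Qed.

Lemma xvecE T : xvec T = Rcoords T.
Proof. by rewrite -{2}(mulmxKV Rmat_unit T) Rcoords_mulRmat. Qed.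

Lemma xvec_negT a (c : 'I_t) : xvec (negT R t a) 0 c =
  if c == 0 :> nat then 1 - (a 1%N)%:R - (a t)%:R else (a c)%:R - (a c.+1)%:R.
Proof.
rewrite xvecE !mxE ord_pred_val; case: ifP => [/eqP c0 | /negbT c_gt0].
  by rewrite c0; case: (a 1%N) (a t) => [] []; rewrite /= ?mulr1n ?mulr0n; lra.
rewrite (negbTE c_gt0) prednK ?lt0n //.
by case: (a c) (a c.+1) => [] []; rewrite /= ?mulr1n ?mulr0n; lra.
Qed.

Lemma qnum_negT a :
  qnum (negT R t a) = ((a 1%N == a t) + \sum_(1 <= c < t) (a c != a c.+1))%N.
Proof.
have nz_first (b1 b2 : bool) : ((1 - b1%:R - b2%:R : R) != 0) = (b1 == b2).
  by case: b1 b2 => [] []; rewrite /= ?(mulr1n, mulr0n, subr0, subrr, sub0r);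
    rewrite ?oppr_eq0 ?oner_eq0 ?eqxx.
have nz_diff (b1 b2 : bool) : ((b1%:R - b2%:R : R) != 0) = (b1 != b2).
  by case: b1 b2 => [] []; rewrite /= ?(mulr1n, mulr0n, subr0, subrr, sub0r);
    rewrite ?oppr_eq0 ?oner_eq0 ?eqxx.
rewrite /qnum -sum1_card big_mkcond big_ord_recl big_add1 big_mkord /=.
rewrite inE xvec_negT /= nz_first; congr (_ + _)%N.
by apply: eq_bigr => c _; rewrite inE xvec_negT /= nz_diff; case: (a c.+1 != a c.+2).
Qed.

Lemma mulmx_Ubar_entry y (c : 'I_t) : (y *m Ubar R t) 0 c = y 0 (rev_ord c).
Proof.
rewrite !mxE (bigD1 (rev_ord c)) //= big1 => [|s s_c]; rewrite !mxE.
  have -> : ((rev_ord c).+1 + c.+1 == t.+1)%N by apply/eqP; have := ltn_ord c; rewrite /=; lia.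
  by rewrite mulr1 addr0.
case: eqP => [sc | _]; last by rewrite mulr0.
by case/eqP: s_c; apply/val_inj => /=; lia.
Qed.

Lemma mulmx_Tbar_entry y (c : 'I_t) :
  (y *m Tbar R t) 0 c = if c == 0 :> nat then 0 else y 0 (ord_pred c).
Proof.
rewrite !mxE; case: ifP => [/eqP c0 | /negbT c_gt0].
  by rewrite big1 // => s _; rewrite !mxE c0 mulr0.
rewrite (bigD1 (ord_pred c)) //= big1 => [|s s_c]; rewrite !mxE.
  by rewrite ord_pred_val (negbTE c_gt0) prednK ?lt0n // eqxx mulr1 addr0.
case: eqP => [cs | _]; last by rewrite mulr0.
by case/eqP: s_c; apply: ord_inj; rewrite ord_pred_val (negbTE c_gt0) cs.
Qed.

Lemma ord_pred_rev_ord_pred (c : 'I_t) : ord_pred (rev_ord (ord_pred c)) = rev_ord c.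
Proof.
apply: ord_inj; rewrite !(ord_pred_val, rev_ord_val).
by case: c => [[|c] lt_ct] /=; case: eqP; lia.
Qed.

Lemma ro_entry T (c : 'I_t) : ro T 0 c = - T 0 (rev_ord c).
Proof. by rewrite mxE mulmx_Ubar_entry. Qed.

Lemma xvec_ro_entry T (c : 'I_t) : xvec (ro T) 0 c =
  if c == 0 :> nat then - xvec T 0 ord0 else xvec T 0 (rev_ord (ord_pred c)).
Proof.
rewrite !xvecE ![Rcoords _ _ _]mxE !ro_entry; case: ifP => [/eqP c0 | /negbT c_gt0].
  have -> : c = ord0 by apply: ord_inj.
  have -> : ord_pred (ord0 : 'I_t) = rev_ord ord0.
    by apply: ord_inj; rewrite ord_pred_val rev_ord_val subn0.
  rewrite rev_ordK /=; lra.
rewrite ord_pred_rev_ord_pred ifF; first lra.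
by rewrite rev_ord_val ord_pred_val (negbTE c_gt0); have := ltn_ord c; lia.
Qed.

Lemma xvec_ro T :
  xvec (ro T) = - xvec T 0 ord0 *: sigma R t 1 + xvec T *m Ubar R t *m Tbar R t.
Proof.
apply/rowP => c; rewrite xvec_ro_entry; move: (xvec T) => X.
rewrite [RHS]mxE mulmx_Tbar_entry mulmx_Ubar_entry !mxE eqSS.
by case: ifP; rewrite ?mulr1 ?mulr0 ?addr0 ?add0r.
Qed.

Lemma qnum_ro T : qnum (ro T) = qnum T.
Proof.
rewrite /qnum -[RHS](card_preimset _ (inj_comp (@rev_ord_inj t) (@ord_pred_inj t))).
congr #|pred_of_set _|; apply/setP => c; rewrite !inE xvec_ro_entry.
case: ifP => [/eqP c0 | _] //=; rewrite oppr_eq0.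
suff -> : rev_ord (ord_pred c) = ord0 by [].
by apply: ord_inj; rewrite rev_ord_val ord_pred_val c0 subnn.
Qed.

Lemma sigma_eq0 e : (t < e)%N -> sigma R t e = 0.
Proof.
move=> lt_te; apply/rowP => c; rewrite !mxE.
by have := ltn_ord c; case: eqP => //; lia.
Qed.

Lemma sum_sigma_entry (I : Type) (r : seq I) (P : pred I) (f : I -> nat) (c : 'I_t) :
  (\sum_(k <- r | P k) sigma R t (f k)) 0 c = (\sum_(k <- r | P k) (f k == c.+1))%N%:R.
Proof. by rewrite summxE natr_sum; apply: eq_bigr => k _; rewrite mxE eq_sym. Qed.

Lemma sigma_Ubar_Tbar e :
  (e <= t)%N -> sigma R t e *m Ubar R t *m Tbar R t = sigma R t (t - e + 2).
Proof.
move=> le_et; apply/rowP => c; rewrite mulmx_Tbar_entry mulmx_Ubar_entry !mxE.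
case: ifP => [/eqP c0 | /negbT c_gt0]; first by rewrite c0 addn2.
rewrite rev_ord_val ord_pred_val (negbTE c_gt0); congr (_%:R).
by apply/eqP/eqP; have := ltn_ord c; lia.
Qed.

End BasisCoordinates.

Lemma big_ord_predr {V : Type} {idx : V} {op : Monoid.law idx} {m} (F : nat -> V) :
  (0 < m)%N -> \big[op/idx]_(k < m) F k = op (\big[op/idx]_(k < m.-1) F k) (F m.-1).
Proof. by case: m => // m _; rewrite big_ord_recr. Qed.

Lemma sum_nat_eq (x m : nat) : (\sum_(c < m) (x == c))%N = (x < m)%N.
Proof.
rewrite -(big_mkord xpredT (fun c => (x == c) : nat)).
transitivity (\sum_(0 <= c < m | c == x) 1)%N; last by rewrite big_nat1_eq.
by rewrite [RHS]big_mkcond; apply: eq_bigr => c _; rewrite eq_sym; case: (c == x).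
Qed.

Lemma sum_nat_eqS (x m : nat) : (\sum_(c < m) (x == c.+1))%N = (0 < x <= m)%N.
Proof.
have := sum_nat_eq x m.+1; rewrite big_ord_recl; under eq_bigr do rewrite lift0.
by rewrite lt0n ltnS; case: eqP => [-> | _] /=; lia.
Qed.

Lemma sum_eq_exists (m e : nat) (f : nat -> nat) :
  (forall k l, (k < m)%N -> (l < m)%N -> f k = f l -> k = l) ->
  (\sum_(k < m) (f k == e))%N = [exists k : 'I_m, f k == e].
Proof.
move=> f_inj; case: existsP => [[k0 /eqP fk0] | no_k].
  rewrite (bigD1 k0) //= fk0 eqxx big1 // => k k_k0; case: eqP => // fk.
  by case/eqP: k_k0; apply/ord_inj/f_inj; rewrite ?ltn_ord // fk fk0.
by rewrite big1 // => k _; case: eqP => // fk; case: no_k; exists k; apply/eqP.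
Qed.

Section Intervals.
Variables (n rho : nat) (i j : nat -> nat).
Local Notation t := n.+1.
Hypotheses (rho_gt0 : (1 <= rho)%N) (i0_gt0 : (1 <= i 0)%N) (jlast_le : (j rho.-1 <= t)%N)
  (i_le_j : forall k, (k < rho)%N -> (i k <= j k)%N)
  (j_lt_i : forall k, (k.+1 < rho)%N -> (j k + 2 <= i k.+1)%N).
Local Notation a := (inA rho i j).

Lemma j_add2_le_i {k l} : (k < l)%N -> (l < rho)%N -> (j k + 2 <= i l)%N.
Proof.
elim: l => // l IHl lt_kl lt_l; have := j_lt_i _ lt_l.
rewrite ltnS leq_eqVlt in lt_kl; case/orP: lt_kl => [/eqP-> // | lt_kl].
by have := IHl lt_kl (ltnW lt_l); have := i_le_j _ (ltnW lt_l); lia.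
Qed.

Lemma i_gt0 {k} : (k < rho)%N -> (0 < i k)%N.
Proof. by case: k => // k lt_k; have := j_add2_le_i (ltn0Sn k) lt_k; lia. Qed.

Lemma j_le_t {k} : (k < rho)%N -> (j k <= t)%N.
Proof.
move=> lt_k; have lt_last : (rho.-1 < rho)%N by lia.
case: (ltngtP k rho.-1) => [lt_k_last | | -> //]; last by lia.
by have := j_add2_le_i lt_k_last lt_last; have := i_le_j _ lt_last; lia.
Qed.

Lemma interval_cases {k l} : (k < rho)%N -> (l < rho)%N ->
  [\/ k = l, (j k + 2 <= i l)%N | (j l + 2 <= i k)%N].
Proof.
move=> lt_k lt_l; case: (ltngtP k l) => [lt_kl | lt_lk | ->]; last exact: Or31.
- exact/Or32/j_add2_le_i.
- exact/Or33/j_add2_le_i.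
Qed.

Lemma j_inj {k l} : (k < rho)%N -> (l < rho)%N -> j k = j l -> k = l.
Proof.
move=> lt_k lt_l; have := i_le_j _ lt_k; have := i_le_j _ lt_l.
by case: (interval_cases lt_k lt_l); lia.
Qed.

Lemma i_inj {k l} : (k < rho)%N -> (l < rho)%N -> i k = i l -> k = l.
Proof.
move=> lt_k lt_l; have := i_le_j _ lt_k; have := i_le_j _ lt_l.
by case: (interval_cases lt_k lt_l); lia.
Qed.

Lemma exists_j_eq e : [exists k : 'I_rho, j k == e] = a e && ~~ a e.+1.
Proof.
apply/existsP/andP => [[k /eqP jk] | [/existsP[k /andP[ik_e e_jk]] not_aS]].
  split; first by apply/existsP; exists k; rewrite -jk leqnn andbT i_le_j.
  apply/negP => /existsP[l /andP[il_e e_jl]]; have := i_le_j _ (ltn_ord k).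
  by case: (interval_cases (ltn_ord k) (ltn_ord l)) => [kl | | ]; [rewrite kl in jk |..]; lia.
exists k; rewrite eqn_leq e_jk andbT leqNgt; apply: contra not_aS => lt_e_jk.
by apply/existsP; exists k; rewrite (leqW ik_e) lt_e_jk.
Qed.

Lemma exists_i_eq e : [exists k : 'I_rho, i k == e.+1] = ~~ a e && a e.+1.
Proof.
apply/existsP/andP => [[k /eqP ik] | [not_a /existsP[k /andP[ik_e e_jk]]]].
  split; last by apply/existsP; exists k; rewrite -ik leqnn i_le_j.
  apply/negP => /existsP[l /andP[il_e e_jl]]; have := i_le_j _ (ltn_ord k).
  by case: (interval_cases (ltn_ord k) (ltn_ord l)) => [kl | | ]; [rewrite kl in ik |..]; lia.
exists k; rewrite eqn_leq ik_e /= leqNgt; apply: contra not_a => lt_ik_e.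
by apply/existsP; exists k; apply/andP; split; lia.
Qed.

Lemma count_j_eq e : (\sum_(k < rho) (j k == e))%N = a e && ~~ a e.+1.
Proof. by rewrite -exists_j_eq; apply: sum_eq_exists => k l; apply: j_inj. Qed.

Lemma count_i_eq e : (\sum_(k < rho) (i k == e.+1))%N = ~~ a e && a e.+1.
Proof. by rewrite -exists_i_eq; apply: sum_eq_exists => k l; apply: i_inj. Qed.

Lemma inA_0 : a 0 = false.
Proof. by apply/negbTE/existsP => -[k /andP[ik0 _]]; have := i_gt0 (ltn_ord k); lia. Qed.

Lemma inA_tS : a t.+1 = false.
Proof. by apply/negbTE/existsP => -[k /andP[_ tS_jk]]; have := j_le_t (ltn_ord k); lia. Qed.

Lemma inA_1 : a 1 = (i 0 == 1)%N.
Proof.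
apply/existsP/eqP => [[[[|k] lt_k]] /= /andP[ik_1 _] | i0_1]; first lia.
  by have := j_add2_le_i (ltn0Sn k) lt_k; have := i_le_j _ rho_gt0; lia.
by exists (Ordinal rho_gt0); apply/andP; split; have := i_le_j _ rho_gt0; rewrite /=; lia.
Qed.

Lemma inA_t : a t = (j rho.-1 == t)%N.
Proof.
have lt_last : (rho.-1 < rho)%N by lia.
apply/existsP/eqP => [[k /andP[_ t_jk]] | jlast_t].
  have := j_le_t (ltn_ord k); have := i_le_j _ lt_last; have := ltn_ord k.
  by case: (ltngtP k rho.-1) => [/j_add2_le_i/(_ lt_last) | | <-]; lia.
by exists (Ordinal lt_last); rewrite /= jlast_t leqnn andbT (leq_trans (i_le_j _ lt_last)).
Qed.

Lemma j_lt_t {k} : (k < rho - a t)%N -> (j k < t)%N.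
Proof.
have lt_last : (rho.-1 < rho)%N by lia.
rewrite inA_t; case: eqP => [jlast_t | jlast_ne] lt_k /=.
  rewrite subn1 in lt_k.
  by have := j_add2_le_i lt_k lt_last; have := i_le_j _ lt_last; lia.
rewrite subn0 in lt_k; rewrite ltn_neqAle j_le_t // andbT; apply/eqP => jk_t.
have := j_le_t lt_last; have := i_le_j _ lt_last.
by case: (ltngtP k rho.-1) => [/j_add2_le_i/(_ lt_last) | | kl]; [..| rewrite kl in jk_t]; lia.
Qed.

Lemma count_boundaries : (\sum_(1 <= c < t) (a c != a c.+1))%N = (2 * rho - a 1 - a t)%N.
Proof.
have total : (\sum_(c < t.+1) (a c != a c.+1))%N = (2 * rho)%N.
  rewrite (eq_bigr (fun c : 'I_t.+1 => \sum_(k < rho) ((j k == c) + (i k == c.+1))))%N;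
    last first.
    by move=> c _; rewrite big_split /= count_j_eq count_i_eq; case: (a c) (a c.+1) => [] [].
  rewrite exchange_big /= (eq_bigr (fun _ => 2%N)) => [|k _].
    by rewrite sum_nat_const card_ord mulnC.
  rewrite big_split /= sum_nat_eq sum_nat_eqS ltnS j_le_t // i_gt0 //.
  by rewrite (leqW (leq_trans (i_le_j _ (ltn_ord k)) (j_le_t (ltn_ord k)))).
rewrite -(big_mkord xpredT (fun c => (a c != a c.+1) : nat)) in total.
rewrite big_ltn // big_nat_recr // inA_0 inA_tS /= in total.
by move: total; case: (a 1) (a t) => [] [] /=; lia.
Qed.

Variable R : realFieldType.
Local Notation T := (negT R t a).
Local Notation sigma := (sigma R t).

Lemma xvec_inA_full :
  xvec T = (~~ a t)%:R *: sigma 1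
    + \sum_(k < rho) sigma (j k + 1) - \sum_(k < rho) sigma (i k).
Proof.
apply/rowP => c; rewrite xvec_negT !mxE !sum_sigma_entry.
under eq_bigr do rewrite addn1 eqSS.
rewrite count_j_eq count_i_eq.
case: c => [[|c] lt_c] /=; first rewrite inA_0.
  by case: (a 1) (a t) => [] []; rewrite /= ?mulr1n ?mulr0n; lra.
by case: (a c.+1) (a c.+2) => [] []; rewrite /= ?mulr1n ?mulr0n; lra.
Qed.

(* If [t \in A], the last term is [sigma (t + 1) = 0]. *)
Lemma sum_sigma_j :
  \sum_(k < rho) sigma (j k + 1) = \sum_(k < rho - a t) sigma (j k + 1).
Proof.
rewrite inA_t; case: eqP => [jlast_t | _] /=; last by rewrite subn0.
rewrite subn1 (big_ord_predr (fun k => sigma (j k + 1)) rho_gt0) /= jlast_t.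
by rewrite sigma_eq0 ?addr0 // addn1.
Qed.

Lemma sum_sigma_i :
  \sum_(k < rho) sigma (i k) = (a 1)%:R *: sigma 1 + \sum_(a 1 <= l < rho) sigma (i l).
Proof.
rewrite -(big_mkord xpredT (fun k => sigma (i k))) inA_1.
case: eqP => [i0_1 | _] /=; last by rewrite scale0r add0r.
by rewrite big_ltn // i0_1 scale1r.
Qed.

Lemma xvec_inA : xvec T = (1 - (a 1)%:R - (a t)%:R) *: sigma 1
  + \sum_(k < rho - a t) sigma (j k + 1) - \sum_(a 1 <= l < rho) sigma (i l).
Proof.
rewrite xvec_inA_full sum_sigma_j sum_sigma_i; apply/rowP => c; rewrite !mxE.
by case: (a 1) (a t) => [] []; rewrite /= ?mulr1n ?mulr0n; lra.
Qed.

Lemma xvec_ro_inA_Ubar_Tbar :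
  xvec (ro T) = - (1 - (a 1)%:R - (a t)%:R) *: sigma 1 + xvec T *m Ubar R t *m Tbar R t.
Proof. by rewrite xvec_ro xvec_negT. Qed.

Lemma xvec_ro_inA : xvec (ro T) = - (1 - (a 1)%:R - (a t)%:R) *: sigma 1
  + \sum_(k < rho - a t) sigma (t - j k + 1) - \sum_(a 1 <= l < rho) sigma (t - i l + 2).
Proof.
rewrite xvec_ro_inA_Ubar_Tbar xvec_inA !(mulmxDl, mulNmx) -!scalemxAl.
rewrite sigma_Ubar_Tbar // (@sigma_eq0 R n (t - 1 + 2)) ?subn1 ?addn2 //.
rewrite scaler0 add0r !mulmx_suml addrA.
congr (_ + _ - _).
  apply: eq_bigr => k _; have lt_jk_t := j_lt_t (ltn_ord k).
  by rewrite sigma_Ubar_Tbar ?addn1 //; congr (sigma _); lia.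
apply: eq_big_nat => l /andP[_ lt_l]; rewrite sigma_Ubar_Tbar //.
exact: leq_trans (i_le_j _ lt_l) (j_le_t lt_l).
Qed.

(* Uniform in the four cases: [a 1] removes the start at position [1] and
   [a t] the end at position [t + 1]. *)
Lemma inA_coordinates :
  [/\ qnum T = ((a 1 == a t) + (2 * rho - a 1 - a t))%N,
      xvec T = (1 - (a 1)%:R - (a t)%:R) *: sigma 1
        + \sum_(k < rho - a t) sigma (j k + 1) - \sum_(a 1 <= l < rho) sigma (i l),
      qnum (ro T) = ((a 1 == a t) + (2 * rho - a 1 - a t))%N,
      xvec (ro T) = - (1 - (a 1)%:R - (a t)%:R) *: sigma 1
        + \sum_(k < rho - a t) sigma (t - j k + 1) - \sum_(a 1 <= l < rho) sigma (t - i l + 2)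
    & xvec (ro T) = - (1 - (a 1)%:R - (a t)%:R) *: sigma 1 + xvec T *m Ubar R t *m Tbar R t].
Proof.
split; rewrite ?qnum_ro ?qnum_negT ?count_boundaries //.
- exact: xvec_inA.
- exact: xvec_ro_inA.
- exact: xvec_ro_inA_Ubar_Tbar.
Qed.

End Intervals.

(* intervals are indexed k = 0..rho-1 (paper's k = 1..rho) *)
Theorem proposition2p2 (R : realFieldType) (t rho : nat) (i j : nat -> nat) :
  (3 <= t)%N -> (1 <= rho)%N ->
  (1 <= i 0)%N -> (j rho.-1 <= t)%N ->
  (forall k, (k < rho)%N -> (i k <= j k)%N) ->
  (forall k, (k.+1 < rho)%N -> (j k + 2 <= i k.+1)%N) ->
  let T : 'rV[R]_t := negT R t (inA rho i j) in
  let X := xvec T in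
  let Xro := xvec (ro T) in
  (* (i) *)
  (inA rho i j 1 && ~~ inA rho i j t ->
     [/\ qnum T = (2 * rho).-1,
         X = \sum_(k < rho) sigma R t (j k + 1) - \sum_(1 <= l < rho) sigma R t (i l),
         qnum (ro T) = (2 * rho).-1,
         Xro = \sum_(k < rho) sigma R t (t - j k + 1)
               - \sum_(1 <= l < rho) sigma R t (t - i l + 2)
       & Xro = X *m Ubar R t *m Tbar R t]) /\
  (* (ii) *)
  (inA rho i j 1 && inA rho i j t ->
     [/\ qnum T = (2 * rho).-1,
         X = - sigma R t 1 + \sum_(k < rho.-1) sigma R t (j k + 1)
             - \sum_(1 <= l < rho) sigma R t (i l),
         qnum (ro T) = (2 * rho).-1,
         Xro = sigma R t 1 + \sum_(k < rho.-1) sigma R t (t - j k + 1)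
               - \sum_(1 <= l < rho) sigma R t (t - i l + 2)
       & Xro = sigma R t 1 + X *m Ubar R t *m Tbar R t]) /\
  (* (iii) *)
  (~~ inA rho i j 1 && ~~ inA rho i j t ->
     [/\ qnum T = (2 * rho).+1,
         X = sigma R t 1 + \sum_(k < rho) sigma R t (j k + 1)
             - \sum_(l < rho) sigma R t (i l),
         qnum (ro T) = (2 * rho).+1,
         Xro = - sigma R t 1 + \sum_(k < rho) sigma R t (t - j k + 1)
               - \sum_(l < rho) sigma R t (t - i l + 2)
       & Xro = - sigma R t 1 + X *m Ubar R t *m Tbar R t]) /\
  (* (iv) *)
  (~~ inA rho i j 1 && inA rho i j t ->
     [/\ qnum T = (2 * rho).-1,
         X = \sum_(k < rho.-1) sigma R t (j k + 1) - \sum_(l < rho) sigma R t (i l),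
         qnum (ro T) = (2 * rho).-1,
         Xro = \sum_(k < rho.-1) sigma R t (t - j k + 1)
               - \sum_(l < rho) sigma R t (t - i l + 2)
       & Xro = X *m Ubar R t *m Tbar R t]).
Proof.
case: t => [//|n] _ rho_gt0 i0_gt0 jlast_le i_le_j j_lt_i T X Xro.
have := inA_coordinates _ _ _ _ rho_gt0 i0_gt0 jlast_le i_le_j j_lt_i R.
move: (inA rho i j 1) (inA rho i j n.+1) => [] [] [qT XT qR XR XRU];
  rewrite /= ?(mulr1n, mulr0n, subr0, subrr, sub0r, opprK, oppr0, scale0r, scale1r,
               scaleN1r, add0r, subn0, subn1, big_mkord) in qT XT qR XR XRU;
  (split; [|split; [|split]]) => // _; split => //; rewrite ?qT ?qR; lia.
Qed.
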